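(* Let $A$ (the source) and $B$ (the target) be finite metric graphs, and let $L(A)$ and $L(B)$ denote their perimeters (the sums of all edge lengths). Let $\alpha>0$ and let $m:\alpha A\to B$ be an isometric covering, where $\alpha A$ denotes $A$ with every edge length multiplied by $\alpha$. Let $\mathcal{D}_m$ be the set of edges of $B$ that are doubly covered by $m$, meaning that every point of the edge has at least two preimages under $m$. Then $$\alpha \;\ge\; \frac{L(B)+\sum_{e\in\mathcal{D}_m}\ell(e)}{L(A)},$$ where $\ell(e)$ is the length of $e$. In particular, the optimal scale factor $\mathrm{OPT}$ satisfies this inequality, with $\mathcal{D}_m$ taken for an isometric covering achieving $\mathrm{OPT}$.
   Context: A metric graph is a graph with a positive length assigned to each edge. It is viewed as a metric space: each edge is a segment of its length, glued at the vertices. An isometric covering of a metric space $Y$ by a metric space $X$ is a surjective map $m:X\to Y$ such that, for every path $p$ in $X$, the arc length of $p$ in $X$ equals the arc length of the curve $m(p)$ in $B$, counted with multiplicity. The optimal scale factor $\mathrm{OPT}$ for source $A$ and target $B$ is the minimum $\alpha$ such that $\alpha A$ has an isometric covering onto $B$. *)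

From HB Require Import structures.
From mathcomp Require Import all_boot all_order all_algebra.
From mathcomp Require Import all_classical all_reals ereal.
Set Implicit Arguments. Unset Strict Implicit. Unset Printing Implicit Defensive.
Import Order.TTheory GRing.Theory Num.Theory.
Local Open Scope ring_scope.

Record mgraph (R : realType) := MGraph {
  gV : finType;
  gE : finType;
  src : gE -> gV;
  tgt : gE -> gV;
  len : gE -> R;
  len_pos : forall e, 0 < len e }.

Arguments gV {R} m. Arguments gE {R} m. Arguments src {R} m _. Arguments tgt {R} m _.
Arguments len {R} m _. Arguments len_pos {R} m e.

Section MetricGraph.
Variable R : realType.

Definition scale (G : mgraph R) (alpha : R) (ha : 0 < alpha) : mgraph R :=
  @MGraph R (gV G) (gE G) (src G) (tgt G) (fun e => alpha * len G e)
    (fun e => mulr_gt0 ha (len_pos G e)).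

Definition perimeter (G : mgraph R) : R := \sum_(e : gE G) len G e.

(* Points of the metric space |G|: vertices, and interior points of edges,
   an interior gpoint of e being given by its arc-length parameter t in (0, len e)
   measured from src e. *)
Inductive gpoint (G : mgraph R) :=
| PV : gV G -> gpoint G
| PE : forall (e : gE G) (t : R), 0 < t < len G e -> gpoint G.

Definition on_edge (G : mgraph R) (x : gpoint G) (e : gE G) (t : R) : Prop :=
  match x with
  | PV v => (t = 0 /\ src G e = v) \/ (t = len G e /\ tgt G e = v)
  | PE e' t' _ => e' = e /\ t' = t
  end.

Inductive walk (G : mgraph R) : gpoint G -> gpoint G -> R -> Prop :=
| walk_nil x : walk x x 0
| walk_cons x z y e s t c :
    on_edge x e s -> on_edge z e t -> walk z y c -> walk x y (`|t - s| + c).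

(* The path (geodesic) metric of G; +oo between different components. *)
Definition gdist (G : mgraph R) (x y : gpoint G) : \bar R :=
  ereal_inf [set (c%:E)%E | c in [set c | walk x y c]].

Definition is_path (G : mgraph R) (p : R -> gpoint G) : Prop :=
  forall t, 0 <= t <= 1 -> forall eps : R, 0 < eps ->
    exists2 delta : R, 0 < delta & forall s, 0 <= s <= 1 -> `|s - t| < delta ->
      (gdist (p t) (p s) < eps%:E)%E.

(* arc length of a curve c : [0,1] -> |G| (sup over partitions of [0,1]);
   this counts multiplicity. *)
Definition arc_length (G : mgraph R) (c : R -> gpoint G) : \bar R :=
  ereal_sup [set l | exists n (ts : nat -> R),
     [/\ ts 0%N = 0, ts n = 1, (forall i, (i < n)%N -> ts i <= ts i.+1) &
         l = (\sum_(i < n) gdist (c (ts i)) (c (ts i.+1)))%E]].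

Definition isometric_covering (X Y : mgraph R) (m : gpoint X -> gpoint Y) : Prop :=
  (forall y, exists x, m x = y) /\
  (forall p : R -> gpoint X, is_path p -> arc_length (m \o p) = arc_length p).

Definition doubly_covered (X Y : mgraph R) (m : gpoint X -> gpoint Y) (e : gE Y) : Prop :=
  forall t (ht : 0 < t < len Y e),
    exists y1 y2, [/\ y1 <> y2, m y1 = PE ht & m y2 = PE ht].

End MetricGraph.

(* An isometric covering m : X -> Y is 1-Lipschitz along every edge of X, since
   it preserves the arc length of each edge segment.  Cut every edge e of X into
   n+1 cells of length len e / (n+1).  Once the cells are shorter than eta/2, a
   cell whose image meets the core [eta, len b - eta] of an edge b of Y is mapped
   into b, so the interval hull of its image has measure at most the cell width;
   these hulls therefore have total measure at most perimeter X.  Conversely, a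
   point of the core of b that is not the image of a vertex has all its
   preimages inside edges of X, so for n large it lies in the hull of some cell,
   and in the hulls of two distinct cells when b is doubly covered.  By continuity
   of Lebesgue measure the hulls thus cover the core of b once (twice if b is
   doubly covered) up to measure eps, and letting eta, eps -> 0 gives
   perimeter Y + sum of the doubly covered lengths <= perimeter X
   = alpha * perimeter A. *)

From HB Require Import structures.
From mathcomp Require Import all_boot all_order all_algebra.
From mathcomp Require Import all_classical all_reals ereal.
From mathcomp Require Import sequences measure lebesgue_measure.
From mathcomp Require Import lra.
Import Order.TTheory GRing.Theory Num.Theory.
Local Open Scope classical_set_scope.
Local Open Scope ring_scope.

Section EdgePoints.
Context {R : realType} {G : mgraph R}.
Implicit Types (e b : gE G) (x z : gpoint G).

Definition clamp (L r : R) : R := if r <= 0 then 0 else if r <= L then r else L.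

Lemma clamp_lipschitz L r r' : 0 < L -> `|clamp L r' - clamp L r| <= `|r' - r|.
Proof.
move=> L0; have h1 := ler_norm (r' - r); have h2 := ler_norm (r - r').
rewrite distrC in h2; rewrite /clamp.
by repeat case: ifP => ?; rewrite ler_norml; apply/andP; split; lra.
Qed.

Definition edge_point e (r : R) : gpoint G :=
  (if (0 < r < len G e) as c return ((0 < r < len G e) = c -> gpoint G)
   then fun h => PE h
   else fun _ => if r <= 0 then PV (src G e) else PV (tgt G e)) erefl.

Lemma edge_point_PE {e r} (h : 0 < r < len G e) : edge_point e r = PE h.
Proof.
rewrite /edge_point; move: (erefl (0 < r < len G e)).
case: {2 3}(0 < r < len G e) => h'; last by rewrite h in h'.
by congr PE; apply: bool_irrelevance.
Qed.

Lemma on_edge_edge_point e r : on_edge (edge_point e r) e (clamp (len G e) r).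
Proof.
rewrite /edge_point /clamp; move: (erefl (0 < r < len G e)).
case: {2 3}(0 < r < len G e) => /= [/andP[r0 rL]|h].
  by split => //; rewrite leNgt r0 /= (ltW rL).
case: ifP => r0; first by left.
right; split => //; case: ifP => // rL.
have {}r0 : 0 < r by rewrite ltNge r0.
by move: h; rewrite r0 /= lt_neqAle rL andbT => /negbFE/eqP.
Qed.

Lemma walk_ge0 {x z c} : walk x z c -> 0 <= c.
Proof. by elim => // *; apply: addr_ge0. Qed.

Lemma gdist_le_walk {x z c} : walk x z c -> (gdist x z <= c%:E)%E.
Proof. by move=> w; apply: ereal_inf_lbound; exists c. Qed.

Lemma gdist_edge_point e r r' :
  (gdist (edge_point e r) (edge_point e r') <= `|r' - r|%:E)%E.
Proof.
set c := `|clamp (len G e) r' - clamp (len G e) r|.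
have w : walk (edge_point e r) (edge_point e r') (c + 0).
  by apply: walk_cons (walk_nil _); apply: on_edge_edge_point.
apply: le_trans (gdist_le_walk w) _.
by rewrite addr0 lee_fin clamp_lipschitz ?len_pos.
Qed.

Definition in_edge b x : bool := if x is PE e _ _ then e == b else false.

Definition edge_param x : R := if x is PE _ t _ then t else 0.

Lemma in_edge_uniq {b b' x} : in_edge b x -> in_edge b' x -> b = b'.
Proof. by case: x => //= e t h /eqP <- /eqP. Qed.

Lemma walk_short_in_edge {x z d} : walk x z d -> forall b, in_edge b x ->
  d < edge_param x -> d < len G b - edge_param x ->
  in_edge b z && (`|edge_param z - edge_param x| <= d).
Proof.
elim=> [y|x0 z0 y e s t c Hx Hz W IH] b.
  by move=> -> _ _; rewrite subrr normr0 lexx.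
case: x0 Hx => [//|e0 t0 h0] /= [? ?]; subst e0 t0 => /eqP <- d1 d2.
have c0 := walk_ge0 W; case/andP: (h0) => s0 sL.
have ts1 := ler_norm (t - s); have ts2 := ler_norm (s - t); rewrite distrC in ts2.
case: z0 Hz W IH => [v|e1 t1 h1] /= Hz W; first by case: Hz => -[Et _] _; lra.
case: Hz => ? ?; subst e1 t1 => /(_ e); rewrite /= eqxx.
case/(_ isT ltac:(lra) ltac:(lra))/andP => -> yt /=.
by have := ler_normD (edge_param y - t) (t - s); rewrite addrA subrK; lra.
Qed.

Lemma gdist_short_in_edge {x z b r} : in_edge b x -> (gdist x z <= r%:E)%E ->
  r < edge_param x -> r < len G b - edge_param x ->
  in_edge b z && (`|edge_param z - edge_param x| <= r).
Proof.
move=> bx xz r1 r2.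
set M := Num.min (edge_param x) (len G b - edge_param x).
have walk_short c : walk x z c -> c < M ->
    in_edge b z && (`|edge_param z - edge_param x| <= c).
  by move=> w; rewrite lt_min => /andP[]; apply: walk_short_in_edge.
have [c w cM] : exists2 c, walk x z c & c < M.
  have : (gdist x z < M%:E)%E by apply: le_lt_trans xz _; rewrite lte_fin lt_min r1.
  by case/ereal_inf_lt => _ [c w <-]; rewrite lte_fin; exists c.
have /andP[-> zc] := walk_short c w cM; rewrite -lee_fin (le_trans _ xz) //.
apply: le_ereal_inf_tmp => _ [c' w' <-]; rewrite lee_fin.
have [c'M|Mc'] := ltP c' M; first by case/andP: (walk_short c' w' c'M).
by apply: le_trans Mc'; apply: le_trans zc (ltW cM).
Qed.

Definition edge_segment e (r r' : R) (t : R) : gpoint G :=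
  edge_point e (r + t * (r' - r)).

Lemma edge_segment_dist e r r' t t' :
  (gdist (edge_segment e r r' t) (edge_segment e r r' t') <= (`|t' - t| * `|r' - r|)%:E)%E.
Proof.
apply: le_trans (gdist_edge_point _ _ _) _.
by rewrite lee_fin opprD addrACA subrr add0r -mulrBl normrM.
Qed.

Lemma is_path_edge_segment e r r' : is_path (edge_segment e r r').
Proof.
move=> t _ eps e0; have r1 : 0 < `|r' - r| + 1 by apply: ltr_wpDl.
exists (eps / (`|r' - r| + 1)) => [|s _]; first exact: divr_gt0.
rewrite ltr_pdivlMr // => st; apply: le_lt_trans (edge_segment_dist _ _ _ _ _) _.
rewrite lte_fin; apply: le_lt_trans st.
by rewrite mulrDr mulr1 lerDl.
Qed.

Lemma arc_length_edge_segment e r r' :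
  (arc_length (edge_segment e r r') <= `|r' - r|%:E)%E.
Proof.
apply: ge_ereal_sup => _ [n [ts [t0 tn tmono ->]]].
apply: (@le_trans _ _ (\sum_(i < n) ((ts i.+1 - ts i) * `|r' - r|)%:E)%E).
  apply: lee_sum => i _; apply: le_trans (edge_segment_dist _ _ _ _ _) _.
  by rewrite ger0_norm // subr_ge0 tmono.
rewrite sumEFin lee_fin -mulr_suml -(big_mkord xpredT (fun i => ts i.+1 - ts i)).
by rewrite telescope_sumr // t0 tn subr0 mul1r.
Qed.

Lemma gdist_le_arc_length (c : R -> gpoint G) :
  (gdist (c 0%R) (c 1%R) <= arc_length c)%E.
Proof.
apply: ereal_sup_ubound; exists 1%N, (fun i => i%:R); split => //.
  by move=> i; rewrite ltnS leqn0 => /eqP ->; rewrite ler_nat.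
by rewrite big_ord_recr big_ord0 /= add0e.
Qed.

End EdgePoints.

Lemma isometric_covering_gdist {R : realType} {X Y : mgraph R} (m : gpoint X -> gpoint Y)
  e r r' : isometric_covering m ->
  (gdist (m (edge_point e r)) (m (edge_point e r')) <= `|r' - r|%:E)%E.
Proof.
case=> _ arc; have := gdist_le_arc_length (m \o edge_segment e r r').
rewrite arc; last exact: is_path_edge_segment.
rewrite /= /edge_segment mul0r mul1r addr0 addrC subrK => /le_trans; apply.
exact: arc_length_edge_segment.
Qed.

Section FiniteCover.
Local Open Scope ereal_scope.
Context {d} {T : ringOfSetsType d} {R : realFieldType} {I : eqType}.
Variables (mu : {content set T -> \bar R}) (f : I -> set T).
Hypothesis mf : forall i, measurable (f i).

Fixpoint covered_once (r : seq I) : set T :=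
  if r is i :: r' then f i `|` covered_once r' else set0.

Fixpoint covered_twice (r : seq I) : set T :=
  if r is i :: r' then covered_twice r' `|` (f i `&` covered_once r') else set0.

Lemma measurable_covered_once r : measurable (covered_once r).
Proof. by elim: r => [|i r IH] /=; [exact: measurable0 | exact: measurableU]. Qed.

Lemma measurable_covered_twice r : measurable (covered_twice r).
Proof.
elim: r => [|i r IH] /=; first exact: measurable0.
by apply: measurableU => //; apply: measurableI => //; apply: measurable_covered_once.
Qed.

Lemma covered_twice_sub_once r : covered_twice r `<=` covered_once r.
Proof. by elim: r => [|i r IH] //= y [/IH|[]]; [right | left]. Qed.

Lemma mem_covered_once {r i y} : i \in r -> f i y -> covered_once r y.
Proof.
elim: r => [//|j r IH] /=; rewrite inE => /orP[/eqP <-|ir] fy; first by left.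
by right; apply: IH.
Qed.

Lemma mem_covered_twice {r i j y} : uniq r -> i \in r -> j \in r -> i != j ->
  f i y -> f j y -> covered_twice r y.
Proof.
elim: r => [//|k r IH] /= /andP[_ ur].
rewrite !inE => /orP[/eqP ->|ir] /orP[/eqP ->|jr] ij fi fj.
- by rewrite eqxx in ij.
- by right; split => //; apply: mem_covered_once jr fj.
- by right; split => //; apply: mem_covered_once ir fi.
- by left; apply: IH.
Qed.

Lemma measure_covered_le_sum r :
  mu (covered_once r) + mu (covered_twice r) <= \sum_(i <- r) mu (f i).
Proof.
elim: r => [|i r IH] /=; first by rewrite big_nil !measure0 adde0.
rewrite big_cons (measureDI mu (mf i) (measurable_covered_once r)).
have mU := measurable_covered_once r; have mT := measurable_covered_twice r.
have fU : f i `|` covered_once r = (f i `\` covered_once r) `|` covered_once r.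
  by rewrite setUDl setDv setD0.
have once : mu (f i `|` covered_once r) <=
    mu (f i `\` covered_once r) + mu (covered_once r).
  by rewrite fU; apply: measureU2 => //; apply: measurableD.
have twice : mu (covered_twice r `|` (f i `&` covered_once r)) <=
    mu (covered_twice r) + mu (f i `&` covered_once r).
  by apply: measureU2 => //; apply: measurableI.
apply: le_trans (leeD once twice) _.
rewrite addeACA [X in X + _]addeC addeACA addeC.
by apply: leeD => //; rewrite addeC.
Qed.

End FiniteCover.

Section EventualCover.
Local Open Scope ereal_scope.
Context {d} {T : measurableType d} {R : realType} (mu : {measure set T -> \bar R}).

(* Continuity from below for the increasing sets [\bigcap_(n >= N) S n]. *)
Lemma measure_eventually_ge (S : (set T)^nat) (Y : set T) (r : R) :
  (forall n, measurable (S n)) -> measurable Y ->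
  (forall y, Y y -> \forall n \near \oo, S n y) ->
  r%:E < mu Y -> \forall n \near \oo, r%:E <= mu (S n).
Proof.
move=> mS mY YS rY.
pose H N := \bigcap_(n in [set n | (N <= n)%N]) S n.
have mH N : measurable (H N).
  by apply: bigcap_measurable => [|n _]; [exists N => /= | exact: mS].
have ndH : nondecreasing_seq H.
  move=> N N' NN'; rewrite subsetEset => y HNy n /= N'n.
  by apply: HNy; apply: leq_trans NN' N'n.
have mUH : measurable (\bigcup_N H N) by exact: bigcup_measurable.
have cvgH := nondecreasing_cvg_mu (mu := mu) mH mUH ndH.
have ndmuH : nondecreasing_seq (mu \o H).
  move=> N N' NN'; apply: le_measure; rewrite ?inE //.
  by have := ndH _ _ NN'; rewrite subsetEset.
have YH : Y `<=` \bigcup_N H N.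
  by move=> y /YS [N _ SN]; exists N => // n /= Nn; apply: SN.
have /(lte_lim ndmuH) : r%:E < limn (mu \o H).
  rewrite (cvg_lim _ cvgH) //; apply: lt_le_trans rY _.
  by apply: le_measure; rewrite ?inE.
move=> /(_ (cvgP _ cvgH)); apply: filterS => N /le_trans; apply.
by apply: le_measure; rewrite ?inE // => y /(_ N (leqnn N)).
Qed.

End EventualCover.

Lemma ler_of_linear_slack {R : realFieldType} {x y : R} (k : R) :
  (forall d, 0 < d -> x - d * k <= y) -> x <= y.
Proof.
move=> xy; apply/ler_addgt0Pr => e e0; have k1 : 0 < `|k| + 1 by apply: ltr_wpDl.
have := xy _ (divr_gt0 e0 k1); have : e / (`|k| + 1) * k <= e.
  by rewrite mulrAC ler_pdivrMr // ler_pM2l //; have := ler_norm k; lra.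
lra.
Qed.

Section Subdivision.
Context {R : realType} {X Y : mgraph R} (m : gpoint X -> gpoint Y).
Hypothesis covm : isometric_covering m.

Local Notation mu := (@lebesgue_measure R).
Local Notation cell n := (gE X * 'I_n.+1)%type.

Definition trace e (s : R) : gpoint Y := m (edge_point e s).

Definition cell_width n e : R := len X e / n.+1%:R.

Definition in_cell {n} (c : cell n) (s : R) : Prop :=
  c.2%:R * cell_width n c.1 <= s <= c.2.+1%:R * cell_width n c.1.

Definition core eta b : set R := `[eta, len Y b - eta]%classic.

Definition meets_core eta b {n} (c : cell n) : Prop := exists s,
  [/\ in_cell c s, in_edge b (trace c.1 s) & core eta b (edge_param (trace c.1 s))].

Definition cell_image {n} (c : cell n) : set R :=
  [set edge_param (trace c.1 s) | s in in_cell c]%classic.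

Definition cell_hull eta b {n} (c : cell n) : set R :=
  if `[< meets_core eta b c >] then `[inf (cell_image c), sup (cell_image c)]%classic
  else set0.

Lemma cell_width_gt0 n e : 0 < cell_width n e.
Proof. by rewrite divr_gt0 ?len_pos. Qed.

Lemma cell_widthE n e : n.+1%:R * cell_width n e = len X e.
Proof. by rewrite mulrC divfK. Qed.

Lemma in_cell_dist {n} {c : cell n} {s s'} : in_cell c s -> in_cell c s' ->
  `|s' - s| <= cell_width n c.1.
Proof.
rewrite /in_cell -natr1 mulrDl mul1r => /andP[a1 a2] /andP[b1 b2].
by rewrite ler_norml; apply/andP; split; lra.
Qed.

Lemma sum_cell_width n : \sum_(c : cell n) cell_width n c.1 = perimeter X.
Proof.
rewrite -(pair_big xpredT xpredT (fun e (i : 'I_n.+1) => cell_width n e)) /=.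
by apply: eq_bigr => e _; rewrite sumr_const card_ord -mulr_natl cell_widthE.
Qed.

Lemma cell_width_small {d} : 0 < d -> \forall n \near \oo, forall e, cell_width n e < d.
Proof.
move=> d0; apply: filter_forall => e.
exists (Num.truncn (len X e / d)).+1 => // n /= Nn.
rewrite /cell_width ltr_pdivrMr // mulrC -ltr_pdivrMr //.
by apply: lt_le_trans (truncnS_gt _) _; rewrite ler_nat ltnW.
Qed.

Lemma cell_of n e t : 0 <= t <= len X e -> exists i : 'I_n.+1, in_cell (e, i) t.
Proof.
case/andP=> t0 tL; have w0 := cell_width_gt0 n e.
have /andP[kt tk] := truncn_itv (divr_ge0 t0 (ltW w0)).
have [kn|nk] := ltnP (Num.truncn (t / cell_width n e)) n.+1.
  exists (Ordinal kn); rewrite /in_cell /= -ler_pdivlMr // kt /=.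
  by rewrite ltW // -ltr_pdivrMr.
exists ord_max; rewrite /in_cell /= cell_widthE tL andbT.
have : n.+1%:R <= t / cell_width n e :> R by apply: le_trans kt; rewrite ler_nat.
rewrite ler_pdivlMr // => /(le_trans _); apply.
by rewrite ler_wpM2r ?ler_nat // ltW.
Qed.

Section Cell.
Context {eta : R} {b : gE Y} {n : nat} {c : cell n}.
Hypothesis fine : 2 * cell_width n c.1 < eta.

Lemma trace_in_edge {s0 s} : in_cell c s0 -> in_edge b (trace c.1 s0) ->
  core eta b (edge_param (trace c.1 s0)) -> in_cell c s ->
  in_edge b (trace c.1 s) &&
  (`|edge_param (trace c.1 s) - edge_param (trace c.1 s0)| <= cell_width n c.1).
Proof.
move=> c0 b0; rewrite /core /= in_itv /= => /andP[y1 y2] cs.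
have w0 := cell_width_gt0 n c.1; have d0 := in_cell_dist c0 cs.
have h1 : `|s - s0| < edge_param (trace c.1 s0) by move: fine; lra.
have h2 : `|s - s0| < len Y b - edge_param (trace c.1 s0) by move: fine; lra.
have /andP[-> d] := gdist_short_in_edge b0 (isometric_covering_gdist m c.1 s0 s covm) h1 h2.
exact: le_trans d d0.
Qed.

Lemma trace_lipschitz {s s'} : meets_core eta b c -> in_cell c s -> in_cell c s' ->
  `|edge_param (trace c.1 s') - edge_param (trace c.1 s)| <= `|s' - s|.
Proof.
case=> s0 [c0 b0 y0] cs cs'; have /andP[bs d] := trace_in_edge c0 b0 y0 cs.
move: y0 d; rewrite /core /= in_itv /= ler_norml => /andP[y1 y2] /andP[d1 d2].
have := in_cell_dist cs cs' => d.
have h1 : `|s' - s| < edge_param (trace c.1 s) by move: fine; lra.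
have h2 : `|s' - s| < len Y b - edge_param (trace c.1 s) by move: fine; lra.
by case/andP: (gdist_short_in_edge bs (isometric_covering_gdist m c.1 s s' covm) h1 h2).
Qed.

Lemma cell_image_small : meets_core eta b c -> cell_image c !=set0 /\
  forall x x', cell_image c x -> cell_image c x' -> x' - x <= cell_width n c.1.
Proof.
move=> hm; case: (hm) => s0 [c0 _ _]; split; first by exists (edge_param (trace c.1 s0)), s0.
move=> _ _ [s cs <-] [s' cs' <-].
have := trace_lipschitz hm cs cs'; have := in_cell_dist cs cs'.
have := ler_norm (edge_param (trace c.1 s') - edge_param (trace c.1 s)); lra.
Qed.

Lemma cell_hull_measure_le : (mu (cell_hull eta b c) <= (cell_width n c.1)%:E)%E.
Proof.
have w0 := cell_width_gt0 n c.1.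
rewrite /cell_hull; case: asboolP => hm; last by rewrite measure0 lee_fin ltW.
rewrite lebesgue_measure_itv /=; case: ifP => _; last by rewrite lee_fin ltW.
have [ne diam] := cell_image_small hm.
rewrite -EFinB lee_fin lerBlDl; apply: ge_sup => // x Sx; rewrite -lerBlDr.
by apply: lb_le_inf => // x' Sx'; rewrite lerBlDr -lerBlDl; apply: diam.
Qed.

Lemma mem_cell_hull {s} : in_cell c s -> in_edge b (trace c.1 s) ->
  core eta b (edge_param (trace c.1 s)) -> cell_hull eta b c (edge_param (trace c.1 s)).
Proof.
move=> cs bs ys; have hm : meets_core eta b c by exists s.
have [[x0 Sx0] diam] := cell_image_small hm.
have Sy : cell_image c (edge_param (trace c.1 s)) by exists s.
rewrite /cell_hull; case: asboolP => // _ /=; rewrite in_itv /=; apply/andP; split.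
  apply: (ge_inf _ Sy); exists (x0 - cell_width n c.1) => x Sx.
  by have := diam _ _ Sx Sx0; lra.
apply: (sup_upper_bound _ Sy); split; first by exists x0.
by exists (x0 + cell_width n c.1) => x Sx; have := diam _ _ Sx0 Sx; lra.
Qed.

End Cell.

Lemma sum_cell_hull_le eta n (c : cell n) : 2 * cell_width n c.1 < eta ->
  (\sum_(b : gE Y) mu (cell_hull eta b c) <= (cell_width n c.1)%:E)%E.
Proof.
move=> fine; have [[b hb]|nb] := pselect (exists b, meets_core eta b c); last first.
  rewrite big1 ?lee_fin ?ltW ?cell_width_gt0 // => b _.
  by rewrite /cell_hull; case: asboolP => [hb|_]; [case: nb; exists b | exact: measure0].
rewrite (bigD1 b) //= big1 ?adde0; first exact: cell_hull_measure_le.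
move=> b' b'b; rewrite /cell_hull; case: asboolP => [[s [cs b's _]]|_]; last exact: measure0.
case: hb => s0 [c0 bs0 ys0]; have /andP[bs _] := trace_in_edge fine c0 bs0 ys0 cs.
by move: b'b; rewrite (in_edge_uniq b's bs) eqxx.
Qed.

Lemma measurable_cell_hull eta b n (c : cell n) : measurable (cell_hull eta b c).
Proof. by rewrite /cell_hull; case: asboolP => _; [exact: measurable_itv | exact: measurable0]. Qed.

Lemma cell_hull_at_preimage {eta b n e t} {ht : 0 < t < len X e} {y} {hy : 0 < y < len Y b} :
  m (PE ht) = PE hy -> core eta b y -> (forall e, 2 * cell_width n e < eta) ->
  exists i : 'I_n.+1, in_cell (e, i) t /\ cell_hull eta b (e, i) y.
Proof.
move=> mt yc fine; have /andP[t0 tL] := ht.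
have [|i ci] := cell_of n e t; first by rewrite !ltW.
exists i; split => //.
have tr : trace e t = PE hy by rewrite /trace (edge_point_PE ht).
by have := mem_cell_hull (b := b) (c := (e, i)) (fine e) ci; rewrite /= tr /= eqxx; apply.
Qed.

Lemma cells_separate {e1 e2 t1 t2} {h1 : 0 < t1 < len X e1} {h2 : 0 < t2 < len X e2} :
  PE h1 <> PE h2 -> \forall n \near \oo, forall i1 i2 : 'I_n.+1,
    in_cell (e1, i1) t1 -> in_cell (e2, i2) t2 -> (e1, i1) != (e2, i2).
Proof.
move=> h12; have [e12|e12] := eqVneq e1 e2; last first.
  by apply: nearW => n i1 i2 _ _; rewrite xpair_eqE negb_and e12.
subst e2; have t12 : 0 < `|t1 - t2|.
  rewrite normr_gt0 subr_eq0; apply: contra_notN h12 => /eqP t12; subst t2.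
  by congr PE; apply: bool_irrelevance.
apply: filterS (cell_width_small t12) => n fine i1 i2 c1 c2.
apply/negP => /eqP[i12]; subst i2.
by have := in_cell_dist c1 c2; have := fine e1; rewrite distrC; lra.
Qed.

Definition doubly_coveredb b : bool := `[< doubly_covered m b >].

Definition covered eta n b : set R :=
  if doubly_coveredb b then covered_twice (cell_hull eta b) (enum {: cell n})
  else covered_once (cell_hull eta b) (enum {: cell n}).

Definition vertex_params : set R := [set edge_param (m (PV v)) | v in [set: gV X]].

Lemma countable_vertex_params : countable vertex_params.
Proof. exact/finite_set_countable/finite_image/finite_finset. Qed.

Lemma measurable_covered eta n b : measurable (covered eta n b).
Proof.
rewrite /covered; case: ifP => _;
  [apply: measurable_covered_twice | apply: measurable_covered_once];
  exact: measurable_cell_hull.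
Qed.

Lemma measure_covered_le eta n b :
  let M := mu (core eta b `&` covered eta n b) in
  (M + (if doubly_coveredb b then M else 0) <= \sum_(c : cell n) mu (cell_hull eta b c))%E.
Proof.
have := measure_covered_le_sum mu _ (measurable_cell_hull eta b n) (enum {: cell n}).
rewrite big_enum /= /covered.
have mC : measurable (core eta b) by exact: measurable_itv.
have [mU mT] := (measurable_covered_once _ (measurable_cell_hull eta b n) (enum {: cell n}),
  measurable_covered_twice _ (measurable_cell_hull eta b n) (enum {: cell n})).
case: ifP => _; apply: le_trans; last first.
  rewrite adde0; apply: (le_trans _ (leeDl _ (measure_ge0 _ _))).
  by apply: le_measure; rewrite ?inE //; exact: measurableI.
apply: leeD; apply: le_measure; rewrite ?inE //; try exact: measurableI.
by move=> y [_ /covered_twice_sub_once].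
Qed.

Lemma eventually_covered {eta b y} : 0 < eta -> core eta b y -> ~ vertex_params y ->
  \forall n \near \oo, covered eta n b y.
Proof.
move=> eta0 yc yV.
have hy : 0 < y < len Y b.
  by move: yc; rewrite /core /= in_itv /= => /andP[? ?]; apply/andP; split; lra.
have preimage x : m x = PE hy -> exists e t (ht : 0 < t < len X e), x = PE ht.
  case: x => [v mv|e t ht _]; last by exists e, t, ht.
  by case: yV; exists v => //; rewrite mv.
have fine : \forall n \near \oo, forall e, 2 * cell_width n e < eta.
  have eta2 : 0 < eta / 2 by lra.
  by apply: filterS (cell_width_small eta2) => n small e; have := small e; lra.
rewrite /covered /doubly_coveredb; case: asboolP => [dc|_].
  have [x1 [x2 [x12 m1 m2]]] := dc y hy.
  have [e1 [t1 [h1 x1E]]] := preimage _ m1; subst x1.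
  have [e2 [t2 [h2 x2E]]] := preimage _ m2; subst x2.
  have sep := cells_separate x12.
  near=> n.
  have fn : forall e, 2 * cell_width n e < eta by near: n.
  have sepn : forall i1 i2 : 'I_n.+1,
    in_cell (e1, i1) t1 -> in_cell (e2, i2) t2 -> (e1, i1) != (e2, i2) by near: n.
  have [i1 [c1 s1]] := cell_hull_at_preimage m1 yc fn.
  have [i2 [c2 s2]] := cell_hull_at_preimage m2 yc fn.
  exact: (mem_covered_twice _ (enum_uniq _) (mem_enum _ _) (mem_enum _ _) (sepn _ _ c1 c2) s1 s2).
have [x mx] := covm.1 (PE hy); have [e [t [ht xE]]] := preimage _ mx; subst x.
near=> n.
have fn : forall e, 2 * cell_width n e < eta by near: n.
have [i [_ si]] := cell_hull_at_preimage mx yc fn.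
exact: (mem_covered_once _ (mem_enum _ _) si).
Unshelve. all: by end_near.
Qed.

Lemma eventually_core_covered eta eps b : 0 < eta -> 0 < eps ->
  \forall n \near \oo,
    ((len Y b - 2 * eta - eps)%:E <= mu (core eta b `&` covered eta n b))%E.
Proof.
move=> eta0 eps0; have [r0|r0] := leP (len Y b - 2 * eta - eps) 0.
  by apply: nearW => n; apply: le_trans (measure_ge0 _ _); rewrite lee_fin.
have mC : measurable (core eta b) by exact: measurable_itv.
have mV : measurable vertex_params.
  by apply: countable_measurable countable_vertex_params => y; exact: measurable_set1.
have V0 := countable_lebesgue_measure0 countable_vertex_params.
apply: (measure_eventually_ge mu _ (core eta b `\` vertex_params)).
- by move=> n; apply: measurableI => //; exact: measurable_covered.
- exact: measurableD.
- by move=> y [yc yV]; apply: filterS (eventually_covered eta0 yc yV) => n; split.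
have CV : (mu (core eta b) <= mu (core eta b `\` vertex_params))%E.
  rewrite -(measureU0 (mu := mu) (measurableD mC mV) mV V0); apply: le_measure; rewrite ?inE //.
    by apply: measurableU => //; exact: measurableD.
  by move=> y Cy; have [Vy|nVy] := pselect (vertex_params y); [right | left].
apply: lt_le_trans CV; rewrite lebesgue_measure_itv /= lte_fin ifT; last by lra.
by rewrite -EFinB lte_fin; lra.
Qed.

Lemma perimeter_bound_margin {d} : 0 < d ->
  \sum_(b : gE Y) ((len Y b - 3 * d) + (if doubly_coveredb b then len Y b - 3 * d else 0))
    <= perimeter X.
Proof.
move=> d0; near \oo => n.
have cov : forall b, ((len Y b - 3 * d)%:E <= mu (core d b `&` covered d n b))%E.
  near: n; apply: filter_forall => b.
  have e3 : len Y b - 3 * d = len Y b - 2 * d - d by lra.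
  by rewrite e3; exact: eventually_core_covered.
have fine : forall e, 2 * cell_width n e < d.
  near: n; have d2 : 0 < d / 2 by lra.
  by apply: filterS (cell_width_small d2) => n small e; have := small e; lra.
rewrite -lee_fin -sumEFin.
apply: (@le_trans _ _ (\sum_b \sum_(c : cell n) mu (cell_hull d b c))%E).
  apply: lee_sum => b _; apply: le_trans (measure_covered_le d n b); rewrite EFinD.
  apply: leeD; first exact: cov.
  by case: ifP => _; [exact: cov | rewrite lee_fin].
rewrite exchange_big /= -(sum_cell_width n) -sumEFin.
by apply: lee_sum => c _; exact: sum_cell_hull_le.
Unshelve. all: by end_near.
Qed.

Theorem isometric_covering_perimeter :
  perimeter Y + \sum_(b : gE Y | doubly_coveredb b) len Y b <= perimeter X.
Proof.
rewrite big_mkcond -big_split /=.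
apply: (ler_of_linear_slack (\sum_b (3 + if doubly_coveredb b then 3 else 0))).
move=> d d0; apply: le_trans (perimeter_bound_margin d0).
by rewrite mulr_sumr -sumrB; apply: ler_sum => b _; case: ifP => _; lra.
Qed.

End Subdivision.

Lemma perimeter_scale (R : realType) (A : mgraph R) (alpha : R) (ha : 0 < alpha) :
  perimeter (scale A ha) = alpha * perimeter A.
Proof. by rewrite /perimeter mulr_sumr. Qed.

Theorem theorem1 (R : realType) (A B : mgraph R) (alpha : R) (ha : 0 < alpha)
  (m : gpoint (scale A ha) -> gpoint B) :
  isometric_covering m ->
  (perimeter B + \sum_(e : gE B | `[< doubly_covered m e >]) len B e) / perimeter A
    <= alpha.
Proof.
move=> covm; have := isometric_covering_perimeter _ covm; rewrite perimeter_scale.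
have [->|PA0] := eqVneq (perimeter A) 0; first by move=> _; rewrite invr0 mulr0; exact: ltW.
have PA : 0 < perimeter A.
  by rewrite lt_def PA0 sumr_ge0 // => e _; exact: ltW (len_pos A e).
by rewrite ler_pdivrMr // mulrC.
Qed.
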